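(* Let $p$ be a prime, $s,m$ positive integers, $n=sm$, $c\in\mathbb{F}_{p^s}$, and $F\in\mathbb{F}_{p^s}[x]$ viewed as a function $\mathbb{F}_{p^n}\to\mathbb{F}_{p^n}$. Let $a,b\in\mathbb{F}_{p^s}$, with $a\neq 0$ if $c=1$. (i) If $F$ is PcN, then the equation $F(x+a)-cF(x)=b$ has no solution $x\in\mathbb{F}_{p^n}\setminus\mathbb{F}_{p^s}$. (ii) If $F$ is APcN and $m$ is odd, then the equation $F(x+a)-cF(x)=b$ has no solution $x\in\mathbb{F}_{p^n}\setminus\mathbb{F}_{p^s}$.
   Context: For $F:\mathbb{F}_{p^n}\to\mathbb{F}_{p^n}$ and $c\in\mathbb{F}_{p^n}$, let ${}_c\Delta_F(a,b)=\#\{x\in\mathbb{F}_{p^n}: F(x+a)-cF(x)=b\}$ and $\delta_{F,c}=\max\{{}_c\Delta_F(a,b): a,b\in\mathbb{F}_{p^n},\ a\neq 0\text{ if } c=1\}$. $F$ is perfect $c$-nonlinear (PcN) if $\delta_{F,c}=1$ and almost perfect $c$-nonlinear (APcN) if $\delta_{F,c}=2$. *)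

From HB Require Import structures.
From mathcomp Require Import all_boot all_order all_algebra all_field.
Set Implicit Arguments. Unset Strict Implicit. Unset Printing Implicit Defensive.
Import Order.TTheory GRing.Theory.
Local Open Scope ring_scope.

(* The ambient finite field L plays the role of F_{p^n}; the subfield F_{p^s}
   is the set of fixed points of x |-> x^(p^s) (the unique subfield of order p^s). *)
Definition in_subfield (L : finFieldType) (q : nat) (x : L) : bool := x ^+ q == x.

Definition cDelta (L : finFieldType) (F : L -> L) (c a b : L) : nat :=
  #|[set x : L | F (x + a) - c * F x == b]|.

Definition cdelta (L : finFieldType) (F : L -> L) (c : L) : nat :=
  \max_(ab : L * L | (c != 1) || (ab.1 != 0)) cDelta F c ab.1 ab.2.

Definition PcN (L : finFieldType) (F : L -> L) (c : L) : Prop := cdelta F c = 1%N.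
Definition APcN (L : finFieldType) (F : L -> L) (c : L) : Prop := cdelta F c = 2%N.

From HB Require Import structures.
From mathcomp Require Import all_boot all_order all_algebra all_field.
Set Implicit Arguments.
Unset Strict Implicit.
Unset Printing Implicit Defensive.
Import GRing.Theory.
Local Open Scope ring_scope.

(* With q = p^s, the map x |-> x^q is a field automorphism of F_{p^n} that
   fixes F_{p^s} pointwise, hence fixes c, a, b and the coefficients of F.  It
   therefore permutes the solutions of F(x + a) - c F(x) = b.  A solution x
   outside F_{p^s} thus comes with the second solution x^q != x, which is
   impossible when F is PcN.  If moreover m is odd, x^(q^2) = x would give
   x = x^(q^m) = x^q, so x, x^q, x^(q^2) are three distinct solutions, which
   is impossible when F is APcN. *)

Section FrobeniusPower.
Variables (R : comNzRingType) (q : nat).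

Definition pFrobenius_pow of [pchar R].-nat q := fun x : R => x ^+ q.

Variable chRq : [pchar R].-nat q.
Local Notation frob := (pFrobenius_pow chRq).

Lemma pFrobenius_powE x : frob x = x ^+ q.
Proof. by []. Qed.

Lemma pFrobenius_pow_is_nmod_morphism : nmod_morphism frob.
Proof.
have q_gt0 : (0 < q)%N by case/andP: chRq.
split=> [|x y]; rewrite !pFrobenius_powE; first by rewrite expr0n gtn_eqF.
exact: exprDn_pchar.
Qed.

Lemma pFrobenius_pow_is_monoid_morphism : monoid_morphism frob.
Proof. by split=> [|x y]; rewrite !pFrobenius_powE ?expr1n ?exprMn. Qed.

HB.instance Definition _ := GRing.isNmodMorphism.Build R R frob
  pFrobenius_pow_is_nmod_morphism.
HB.instance Definition _ := GRing.isMonoidMorphism.Build R R frob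
  pFrobenius_pow_is_monoid_morphism.

Lemma cdiff_eq_pFrobenius_pow (P : {poly R}) (c a b x : R) :
  (forall i, frob P`_i = P`_i) -> frob c = c -> frob a = a -> frob b = b ->
  P.[x + a] - c * P.[x] = b -> P.[frob x + a] - c * P.[frob x] = b.
Proof.
move=> fixP fixc fixa fixb eq_x.
have fixPoly : map_poly frob P = P by apply/polyP => i; rewrite coef_map /= fixP.
rewrite -fixa -rmorphD -fixPoly !horner_map -fixc -rmorphM -rmorphB.
by rewrite eq_x /= fixb.
Qed.

End FrobeniusPower.

Lemma cDelta_le_cdelta (L : finFieldType) (F : L -> L) (c a b : L) :
  (c = 1 -> a != 0) -> (cDelta F c a b <= cdelta F c)%N.
Proof.
move=> c1_a0; apply: (leq_bigmax_cond (a, b)) => /=.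
by case: eqP => [/c1_a0 -> | _]; rewrite ?orbT.
Qed.

Section OrbitCard.
Variables (T : finType) (f : T -> T) (A : {set T}).
Hypothesis fA : {in A, forall y, f y \in A}.

Lemma card_orbit_ge2 x : x \in A -> f x != x -> (2 <= #|A|)%N.
Proof.
move=> Ax fx_x; apply/card_geqP; exists [:: x; f x].
split=> //= [|y]; first by rewrite inE eq_sym fx_x.
by rewrite !inE => /orP[]/eqP->; rewrite ?fA.
Qed.
Lemma card_orbit_ge3 x : injective f -> x \in A -> f x != x -> f (f x) != x ->
  (3 <= #|A|)%N.
Proof.
move=> inj_f Ax fx_x ffx_x; apply/card_geqP; exists [:: x; f x; f (f x)].
have ffx_fx : f (f x) != f x by rewrite (inj_eq inj_f).
split=> //= [|y]; first by rewrite !inE !negb_or !(eq_sym x) fx_x ffx_x eq_sym ffx_fx.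
by rewrite !inE => /or3P[]/eqP->; rewrite ?fA.
Qed.

End OrbitCard.

Lemma exprX_fixed_odd (R : nzSemiRingType) (x : R) (q m : nat) :
  odd m -> x ^+ (q ^ m) = x -> x ^+ (q ^ 2) = x -> x ^+ q = x.
Proof.
move=> odd_m xqm xq2; rewrite -{2}xqm -(odd_double_half m) odd_m add1n -mul2n.
elim: m./2 => [|k ->]; first by rewrite expn1.
by rewrite mulnS -addnS expnD exprM xq2.
Qed.

Theorem proposition2p3 (L : finFieldType) (p s m : nat) (P : {poly L}) (c a b : L) :
  prime p -> p \in [pchar L] -> (0 < s)%N -> (0 < m)%N -> #|L| = (p ^ (s * m))%N ->
  in_subfield (p ^ s) c ->
  (forall i : nat, in_subfield (p ^ s) P`_i) ->
  in_subfield (p ^ s) a -> in_subfield (p ^ s) b ->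
  (c = 1 -> a != 0) ->
  (PcN (fun x => P.[x]) c ->
     forall x : L, P.[x + a] - c * P.[x] = b -> in_subfield (p ^ s) x) /\
  (APcN (fun x => P.[x]) c -> odd m ->
     forall x : L, P.[x + a] - c * P.[x] = b -> in_subfield (p ^ s) x).
Proof.
move=> p_pr pchLp _ _ cardL fixc fixP fixa fixb c1_a0.
have chLq : [pchar L].-nat (p ^ s)%N by rewrite pnatX (pnatE _ p_pr) pchLp.
set frob := pFrobenius_pow chLq.
set S := [set x : L | P.[x + a] - c * P.[x] == b].
have frobS : {in S, forall x, frob x \in S}.
  move=> x; rewrite !inE => /eqP eq_x; apply/eqP.
  by apply: cdiff_eq_pFrobenius_pow eq_x => [i|||]; apply/eqP; [exact: fixP|..].
have S_le := cDelta_le_cdelta (fun x => P.[x]) b c1_a0.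
split=> [PcN_P | APcN_P odd_m] x eq_x; apply/negPn/negP => frobx_x;
  have Sx : x \in S by rewrite inE eq_x.
- by have := leq_trans (card_orbit_ge2 frobS Sx frobx_x) S_le; rewrite PcN_P.
- have frob2x_x : frob (frob x) != x.
    apply: contra frobx_x => /eqP frob2x; apply/eqP/(exprX_fixed_odd odd_m).
      by rewrite -expnM -cardL expf_card.
    by rewrite expnS expn1 exprM.
  have := card_orbit_ge3 frobS (fmorph_inj frob) Sx frobx_x frob2x_x.
  by move/leq_trans/(_ S_le); rewrite APcN_P.
Qed.
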